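(* Consider the coordination game and let $\mathcal Z$ be the set of $z\in\{0,\tfrac1n,\dots,1\}$ such that $z=F_c\!\left(\frac{n}{n-1}(z-\epsilon)\right)$ for every $\epsilon\in(0,\tfrac1n]$. Then for each $z\in\mathcal Z$ there is exactly one Nash equilibrium $x^*$ with $z(x^* )=z$, and the number of Nash equilibria satisfies $|\mathcal N|=|\mathcal Z|$, with $1\le|\mathcal Z|\le n+1$.
   Context: Let $\mathcal V$ be a finite set of $n\ge2$ agents, all coordinating. Given real weights $d_i$, the coordination game has action set $\{-1,+1\}$, configuration space $\mathcal X=\{-1,+1\}^{\mathcal V}$ and utilities $u_i(x)=\sum_{j\neq i}x_ix_j-d_ix_i$. A (pure) Nash equilibrium is an $x\in\mathcal X$ with $u_i(x)\ge u_i(y_i,x_{-i})$ for all $i$ and $y_i\in\{-1,+1\}$; $\mathcal N$ denotes the set of Nash equilibria. Thresholds: $r_i=\tfrac12+\tfrac{d_i}{2(n-1)}$. For $x\in\mathcal X$, $z(x)=\frac1n|\{i: x_i=+1\}|$. The threshold CDF is $F_c(t)=\frac1n|\{i\in\mathcal V: r_i\le t\}|$, $t\in\mathbb R$. *)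

(* Agents are 'I_n; action +1 is encoded as true, -1 as false. *)
From HB Require Import structures.
From mathcomp Require Import all_boot all_order all_algebra.
Set Implicit Arguments. Unset Strict Implicit. Unset Printing Implicit Defensive.
From Stdlib Require Import ClassicalEpsilon.
Import Order.TTheory GRing.Theory Num.Theory.
Local Open Scope ring_scope.

Definition act (R : nzRingType) (b : bool) : R := if b then 1 else -1.

Definition util (R : nzRingType) (n : nat) (d : 'I_n -> R)
    (i : 'I_n) (x : {ffun 'I_n -> bool}) : R :=
  \sum_(j < n | j != i) act R (x i) * act R (x j) - d i * act R (x i).

Definition deviate (n : nat) (x : {ffun 'I_n -> bool}) (i : 'I_n) (y : bool)
    : {ffun 'I_n -> bool} :=
  [ffun j => if j == i then y else x j].

Definition is_nash (R : realDomainType) (n : nat) (d : 'I_n -> R)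
    (x : {ffun 'I_n -> bool}) : bool :=
  [forall i : 'I_n, forall y : bool, util d i (deviate x i y) <= util d i x].

Definition nash_set (R : realDomainType) (n : nat) (d : 'I_n -> R)
    : {set {ffun 'I_n -> bool}} := [set x | is_nash d x].

Definition thr (R : realFieldType) (n : nat) (d : 'I_n -> R) (i : 'I_n) : R :=
  2^-1 + d i / (2 * (n%:R - 1)).

Definition Fc (R : realFieldType) (n : nat) (d : 'I_n -> R) (t : R) : R :=
  #|[set i : 'I_n | thr d i <= t]|%:R / n%:R.

Definition zfrac (R : realFieldType) (n : nat) (x : {ffun 'I_n -> bool}) : R :=
  #|[set i : 'I_n | x i]|%:R / n%:R.

Definition pbool (P : Prop) : bool :=
  if excluded_middle_informative P then true else false.

(* The set Z, with z = k/n indexed by k : 'I_(n+1) *)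
Definition Zset (R : realFieldType) (n : nat) (d : 'I_n -> R) : {set 'I_n.+1} :=
  [set k : 'I_n.+1 | pbool (forall eps : R, 0 < eps -> eps <= n%:R^-1 ->
       ((k%:R / n%:R : R) = Fc d (n%:R / (n%:R - 1) * (k%:R / n%:R - eps)))) ].

(** Writing [k] for the number of agents playing [+1], the aggregate action is
    [2k - n], so agent [i] is content with [+1] iff [d_i <= 2k - n - 1] and with
    [-1] iff [d_i >= 2k - n + 1].  Hence a Nash equilibrium is the threshold
    profile of its own count [k], and a count [k] comes from an equilibrium iff
    exactly [k] weights lie below [2k - n - 1] and none lies strictly between
    [2k - n - 1] and [2k - n + 1].  Rescaling [F_c], this is precisely the
    condition defining [Z], so sending [k] to its threshold profile is a
    bijection from [Z] onto [N].  Existence follows from the interlacing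
    [A_0 <= B_0 <= A_1 <= ...] of the two families of sublevel sets: the least
    [k] with [|B_k| <= k] has [|A_k| = |B_k| = k]. *)

From HB Require Import structures.
From mathcomp Require Import all_boot all_order all_algebra.
From mathcomp Require Import ring lra zify.
From Stdlib Require Import ClassicalEpsilon.
Set Implicit Arguments. Unset Strict Implicit.
Import Order.TTheory GRing.Theory Num.Theory.
Local Open Scope ring_scope.

Lemma pboolP (P : Prop) : reflect P (pbool P).
Proof. by rewrite /pbool; case: excluded_middle_informative => h; constructor. Qed.

Lemma eq_nat_ratio (R : numFieldType) (n a b : nat) : (0 < n)%N ->
  (a%:R / n%:R == b%:R / n%:R :> R) = (a == b).
Proof.
move=> n0; have n0R : n%:R^-1 != 0 :> R by rewrite invr_eq0 pnatr_eq0 -lt0n.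
by rewrite (inj_eq (mulIf n0R)) eqr_nat.
Qed.

Section Sublevel.
Variables (T : finType) (R : realDomainType) (f : T -> R).

Definition sublevel (c : R) : {set T} := [set i | f i <= c].
Definition strict_sublevel (c : R) : {set T} := [set i | f i < c].

Lemma sublevel_window (a b : R) (k : nat) : a < b ->
  (forall c, a <= c < b -> #|sublevel c| = k) <->
  #|sublevel a| = k /\ strict_sublevel b \subset sublevel a.
Proof.
move=> ab; split=> [H | [Ha sub] c /andP [ac cb]].
  have Ha : #|sublevel a| = k by apply: H; rewrite lexx ab.
  split=> //; apply/subsetP => i; rewrite !inE => fib.
  rewrite leNgt; apply/negP => afi.
  have sub : i |: sublevel a \subset sublevel (f i).
    by apply/subsetP => j; rewrite !inE => /predU1P [-> //| /le_trans ->]; rewrite ?ltW.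
  have Hfi : #|sublevel (f i)| = k by apply: H; rewrite ltW ?afi.
  by have := subset_leq_card sub; rewrite cardsU1 Hfi Ha inE leNgt afi ltnn.
suff -> : sublevel c = sublevel a by [].
apply/eqP; rewrite eqEsubset; apply/andP; split.
  apply: subset_trans sub; apply/subsetP => i; rewrite !inE => /le_lt_trans; exact.
by apply/subsetP => i; rewrite !inE => /le_trans; apply.
Qed.

End Sublevel.

Lemma interlaced_fixpoint (T : finType) (A B : nat -> {set T}) :
  (forall k, A k \subset B k) -> (forall k, B k \subset A k.+1) ->
  exists2 k, #|A k| = k & B k \subset A k.
Proof.
move=> AB BA.
have smallB : exists k, (#|B k| <= k)%N by exists #|T|; apply: max_card.
case: (ex_minnP smallB) => k Bk kmin.
have cardA : #|A k| = k.
  have := subset_leq_card (AB k); case: k Bk kmin => [|k] Bk kmin; first lia.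
  have : (k < #|B k|)%N by rewrite ltnNge; apply/negP => /kmin; rewrite ltnn.
  have := subset_leq_card (BA k); lia.
have eqAB : A k =i B k.
  apply/subset_cardP; last exact: AB.
  by apply/eqP; rewrite eqn_leq subset_leq_card // cardA Bk.
by exists k => //; apply/subsetP => i; rewrite eqAB.
Qed.

Section CoordinationGame.
Variables (R : realFieldType) (n : nat) (d : 'I_n -> R).

Definition npos (x : {ffun 'I_n -> bool}) : nat := #|[set i | x i]|.

Lemma npos_le x : (npos x <= n)%N.
Proof. by apply: leq_trans (max_card _) _; rewrite card_ord. Qed.

Definition aggregate (k : nat) : R := 2 * k%:R - n%:R.

Lemma sum_act (x : {ffun 'I_n -> bool}) : \sum_(j < n) act R (x j) = aggregate (npos x).
Proof.
have -> : \sum_(j < n) act R (x j) = \sum_(j < n) (2 * (x j)%:R - 1).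
  by apply: eq_bigr => j _; case: (x j); rewrite /act /= ?mulr1 ?mulr0; ring.
rewrite sumrB -mulr_sumr sumr_const card_ord /aggregate /npos -sum1_card natr_sum.
rewrite [in RHS]big_mkcond /=; congr (2 * _ - _).
by apply: eq_bigr => j _; rewrite inE; case: (x j).
Qed.

Lemma util_deviate (x : {ffun 'I_n -> bool}) i y :
  util d i (deviate x i y) = act R y * (aggregate (npos x) - act R (x i) - d i).
Proof.
have -> : aggregate (npos x) - act R (x i) = \sum_(j < n | j != i) act R (x j).
  by rewrite -sum_act (bigD1 i) //= addrC addrK.
rewrite /util /deviate -mulr_sumr mulrBr !ffunE eqxx (mulrC (d i)).
by congr (_ * _ - _); apply: eq_bigr => j /negbTE ji; rewrite ffunE ji.
Qed.

Lemma deviate_id (x : {ffun 'I_n -> bool}) i : deviate x i (x i) = x.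
Proof. by apply/ffunP => j; rewrite ffunE; case: eqP => [-> |]. Qed.

Lemma nashP (x : {ffun 'I_n -> bool}) : is_nash d x <->
  forall i, if x i then d i <= aggregate (npos x) - 1
            else aggregate (npos x) + 1 <= d i.
Proof.
have dev i y : util d i (deviate x i y) <= util d i x =
    (act R y * (aggregate (npos x) - act R (x i) - d i)
       <= act R (x i) * (aggregate (npos x) - act R (x i) - d i)).
  by rewrite -{2}(deviate_id x i) !util_deviate.
split=> [/forallP H i | H].
  by have /forallP/(_ (~~ x i)) := H i; rewrite dev; case: (x i); rewrite /act /=; lra.
apply/forallP => i; apply/forallP => y; rewrite dev; have := H i.
by case: (x i); case: y; rewrite /act; lra.
Qed.

Definition equilibrium_count (k : nat) : Prop :=
  #|sublevel d (aggregate k - 1)| = k /\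
  strict_sublevel d (aggregate k + 1) \subset sublevel d (aggregate k - 1).

Definition profile (k : nat) : {ffun 'I_n -> bool} :=
  [ffun i => i \in sublevel d (aggregate k - 1)].

Lemma nash_profile (x : {ffun 'I_n -> bool}) : is_nash d x ->
  equilibrium_count (npos x) /\ x = profile (npos x).
Proof.
move/nashP => H.
have supp : [set i | x i] = sublevel d (aggregate (npos x) - 1).
  apply/setP => i; rewrite !inE; have := H i.
  by case: (x i) => [-> //|]; rewrite leNgt => /negbTE; lra.
split; last by apply/ffunP => i; rewrite ffunE -supp inE.
split; first by rewrite -supp.
rewrite -supp; apply/subsetP => i; rewrite !inE; have := H i.
by case: (x i) => // h; rewrite ltNge h.
Qed.

Lemma profile_nash k : equilibrium_count k ->
  is_nash d (profile k) /\ npos (profile k) = k.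
Proof.
move=> [cardA sub].
have cnt : npos (profile k) = k.
  by rewrite -[RHS]cardA; apply: eq_card => i; rewrite inE ffunE.
split=> //; apply/nashP => i; rewrite cnt ffunE.
case: ifPn => [| /negP iA]; first by rewrite inE.
by rewrite leNgt; apply/negP => iB; apply: iA; apply: (subsetP sub); rewrite inE.
Qed.

Lemma exists_equilibrium_count : exists2 k, equilibrium_count k & (k <= n)%N.
Proof.
have AB k : sublevel d (aggregate k - 1) \subset strict_sublevel d (aggregate k + 1).
  by apply/subsetP => i; rewrite !inE; lra.
have BA k : strict_sublevel d (aggregate k + 1) \subset sublevel d (aggregate k.+1 - 1).
  by apply/subsetP => i; rewrite !inE /aggregate -natr1; lra.
have [k cardA sub] := interlaced_fixpoint AB BA.
by exists k; rewrite // -cardA; apply: leq_trans (max_card _) _; rewrite card_ord.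
Qed.

Hypothesis n2 : (2 <= n)%N.

Lemma thr_le_rescaled i (k : nat) (eps : R) :
  (thr d i <= n%:R / (n%:R - 1) * (k%:R / n%:R - eps)) =
  (d i <= aggregate k + 1 - 2 * n%:R * eps).
Proof.
have hn : (2 : R) <= n%:R by rewrite (ler_nat R 2 n).
have c0 : n%:R - 1 != 0 :> R by rewrite subr_eq0; apply/eqP => h; rewrite h in hn; lra.
have n0 : n%:R != 0 :> R by apply/eqP => h; rewrite h in hn; lra.
rewrite -subr_le0 -[in RHS]subr_le0.
have -> : thr d i - n%:R / (n%:R - 1) * (k%:R / n%:R - eps) =
   (d i - (aggregate k + 1 - 2 * n%:R * eps)) / (2 * (n%:R - 1)).
  by rewrite /thr /aggregate; field; rewrite c0 n0.
by rewrite pmulr_lle0 // invr_gt0; lra.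
Qed.

(** [eps] in [(0, 1/n]] corresponds to the cut-off [c = 2k - n + 1 - 2 n eps]
    in [[2k - n - 1, 2k - n + 1)]. *)
Lemma Zset_sublevelP (k : 'I_n.+1) : k \in Zset d <->
  forall c, aggregate k - 1 <= c < aggregate k + 1 -> #|sublevel d c| = k.
Proof.
have n0 : (0 < n)%N by apply: leq_trans n2.
have np : 0 < n%:R :> R by rewrite ltr0n.
have cut eps : [set i | thr d i <= n%:R / (n%:R - 1) * (k%:R / n%:R - eps)] =
               sublevel d (aggregate k + 1 - 2 * n%:R * eps).
  by apply/setP => i; rewrite !inE thr_le_rescaled.
have Fc_eq eps : (k%:R / n%:R = Fc d (n%:R / (n%:R - 1) * (k%:R / n%:R - eps)))
    <-> #|sublevel d (aggregate k + 1 - 2 * n%:R * eps)| = k.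
  by rewrite /Fc -cut; split=> [/eqP | ->]; rewrite ?eq_nat_ratio // => /eqP.
rewrite inE; split=> [/pboolP H c /andP [c1 c2] | H]; last first.
  apply/pboolP => eps e0 e1; apply/Fc_eq/H.
  have : eps * n%:R <= 1 by rewrite -ler_pdivlMr // mul1r.
  nra.
pose eps := (aggregate k + 1 - c) / (2 * n%:R).
have -> : c = aggregate k + 1 - 2 * n%:R * eps by rewrite /eps; field; lra.
apply/Fc_eq/H; rewrite /eps; first by rewrite divr_gt0 ?mulr_gt0 //; lra.
by rewrite ler_pdivrMr ?mulr_gt0 // mulrCA mulVf ?mulr1; lra.
Qed.

Lemma ZsetP (k : 'I_n.+1) : k \in Zset d <-> equilibrium_count k.
Proof.
rewrite Zset_sublevelP sublevel_window; first by [].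
by rewrite ltrD2l; lra.
Qed.

Lemma nash_setE : nash_set d = [set profile k | k : 'I_n.+1 in Zset d].
Proof.
apply/setP => x; rewrite inE; apply/idP/imsetP => [/nash_profile [eqc ->] | [k kZ ->]].
  have kx : (inord (npos x) : 'I_n.+1) = npos x :> nat by rewrite inordK // ltnS npos_le.
  by exists (inord (npos x)); rewrite ?kx //; apply/ZsetP; rewrite kx.
by have [] := profile_nash (proj1 (ZsetP k) kZ).
Qed.

End CoordinationGame.

Theorem mainTheorem4 (R : realFieldType) (n : nat) (d : 'I_n -> R) :
  (2 <= n)%N ->
  (forall k : 'I_n.+1, k \in Zset d ->
     exists! x : {ffun 'I_n -> bool},
       x \in nash_set d /\ zfrac R x = k%:R / n%:R) /\
  #|nash_set d| = #|Zset d| /\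
  (1 <= #|Zset d| <= n.+1)%N.
Proof.
move=> n2; have n0 : (0 < n)%N by apply: leq_trans n2.
have zfracE (x : {ffun 'I_n -> bool}) (k : nat) : (zfrac R x = k%:R / n%:R) <-> npos x = k.
  by rewrite /zfrac; split=> [/eqP|<-]; rewrite ?eq_nat_ratio // => /eqP.
have profile_inj : {in Zset d &, injective (fun k : 'I_n.+1 => profile d k)}.
  move=> k l /ZsetP-/(_ n2)/profile_nash[_ nk] /ZsetP-/(_ n2)/profile_nash[_ nl] eqkl.
  by apply/val_inj; rewrite /= -nk -nl eqkl.
split; [|split].
- move=> k /ZsetP-/(_ n2) /profile_nash [kN nk]; exists (profile d k).
  split; first by rewrite inE zfracE.
  by move=> y [yN /zfracE yk]; rewrite inE in yN; rewrite (proj2 (nash_profile yN)) yk.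
- by rewrite nash_setE // (card_in_imset profile_inj).
- have [k eqk kn] := exists_equilibrium_count d.
  apply/andP; split; last by apply: leq_trans (max_card _) _; rewrite card_ord.
  by rewrite card_gt0; apply/set0Pn; exists (inord k); apply/ZsetP; rewrite ?inordK.
Qed.
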